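(* Let $k$ be an algebraically closed field of characteristic $p > 0$ and let $n \geq 1$. There exists a one-to-one correspondence between the set $\coprod_{r \geq 0} \mathrm{Hom}_{\mathrm{gr}}((\mathbb{Z}/p\mathbb{Z})^r, \mathrm{GL}(n,k))$ of all group homomorphisms from $(\mathbb{Z}/p\mathbb{Z})^r$ to $\mathrm{GL}(n,k)$, where $r$ ranges over all non-negative integers (disjoint union over $r$), and the set $\mathrm{Mat}(n,k[T])^E \times \mathbb{Z}_{\geq 0}$.
   Context: A matrix $A(T) \in \mathrm{Mat}(n,k[T])$ is an exponential matrix if $A(T)A(T') = A(T+T')$ in $\mathrm{Mat}(n,k[T,T'])$ ($T,T'$ independent variables) and $A(0) = I_n$; $\mathrm{Mat}(n,k[T])^E$ denotes the set of all exponential matrices of $\mathrm{Mat}(n,k[T])$. *)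

From HB Require Import structures.
From mathcomp Require Import all_boot all_order all_algebra.
Set Implicit Arguments. Unset Strict Implicit. Unset Printing Implicit Defensive.
Import GRing.Theory.
Local Open Scope ring_scope.

Definition Zp_pow (p r : nat) := {ffun 'I_r -> 'Z_p}.

Definition is_hom_GL (k : fieldType) (n p r : nat)
  (f : {ffun Zp_pow p r -> 'M[k]_n}) : Prop :=
  (forall x, f x \in unitmx) /\ (forall x y, f (x + y) = f x *m f y).

(* k[T,T'] is {poly {poly k}}: T is the inner variable ('X%:P), T' the outer 'X. *)
Definition polyT (k : fieldType) (q : {poly k}) : {poly {poly k}} := q%:P.
Definition polyT' (k : fieldType) (q : {poly k}) : {poly {poly k}} := q^:P.
Definition polyTT' (k : fieldType) (q : {poly k}) : {poly {poly k}} :=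
  (q^:P) \Po ('X + ('X : {poly k})%:P).

Definition is_exponential (k : fieldType) (n : nat) (A : 'M[{poly k}]_n) : Prop :=
  map_mx (@polyT k) A *m map_mx (@polyT' k) A = map_mx (@polyTT' k) A /\
  map_mx (fun q : {poly k} => q.[0]) A = 1%:M.

From HB Require Import structures.
From mathcomp Require Import all_boot all_order all_algebra.
From Stdlib Require Import ProofIrrelevance.
Set Implicit Arguments. Unset Strict Implicit. Unset Printing Implicit Defensive.
Import GRing.Theory.
Local Open Scope ring_scope.

(* Write A(T) = \sum_i A_i T^i.  A is exponential iff A_0 = 1 and
   A_i A_j = binom(i+j, i) A_(i+j); in particular the A_i commute.  In
   characteristic p, Lucas' congruence binom(p^e m, i) = [p^e | i] binom(m, i / p^e)
   shows that every N_e := A_(p^e) satisfies N_e^p = 0 and that A is determined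
   by the N_e, which vanish for large e.  Conversely every commuting family of
   such N_e comes from A(T) = prod_e exp_p(N_e T^(p^e)), where exp_p is the
   exponential series truncated below degree p.  On the other side a
   homomorphism f : (Z/pZ)^r -> GL(n,k) amounts to the r commuting matrices
   N_i := f(e_i) - 1, again with N_i^p = 0.  So (r, f) corresponds to (A, r - s)
   where A_(p^i) = f(e_i) - 1 for i < r, A_(p^e) = 0 for e >= r, and s is the
   least integer with A_(p^e) = 0 for all e >= s. *)

Lemma coefXD1n (R : nzRingType) m i : (('X + 1) ^+ m : {poly R})`_i = 'C(m, i)%:R.
Proof.
rewrite exprD1n coef_sum.
under eq_bigr => j _ do rewrite coefMn coefXn.
case: (ltnP m i) => [lt_mi|le_im].
  by rewrite bin_small // big1 // => j _; rewrite gtn_eqF ?mul0rn // (leq_trans _ lt_mi).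
have lt_im : (i < m.+1)%N by rewrite ltnS.
rewrite (bigD1 (inord i : 'I_m.+1)) //= inordK // eqxx big1 ?addr0 // => j.
by rewrite -(inj_eq val_inj) /= inordK // eq_sym => /negPf->; rewrite mul0rn.
Qed.

Lemma bin_symD i j : 'C(i + j, i) = 'C(i + j, j).
Proof. by rewrite -[X in 'C(_, X)](addnK j i) bin_sub ?leq_addl. Qed.

Lemma bin_pchar_pexpM (R : comNzRingType) (p e m i : nat) : p \in [pchar R] ->
  ('C(p ^ e * m, i)%:R : R) = if (p ^ e %| i)%N then 'C(m, i %/ p ^ e)%:R else 0.
Proof.
move=> pcharRp; have p_gt0 := prime_gt0 (pcharf_prime pcharRp).
have pcharPp : p \in [pchar {poly R}] by rewrite pchar_poly.
have pnat_pe : [pchar {poly R}].-nat (p ^ e)%N.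
  by rewrite pnatX (eq_pnat _ (pcharf_eq pcharPp)) pnat_id ?(pcharf_prime pcharRp).
rewrite -coefXD1n exprM exprDn_pchar // expr1n.
have -> : ('X ^+ (p ^ e) + 1 : {poly R}) = ('X + 1) \Po 'X^(p ^ e).
  by rewrite comp_polyD comp_polyX comp_polyC.
rewrite -rmorphXn /= coef_comp_poly_Xn ?expn_gt0 ?p_gt0 //.
by case: ifP => // _; rewrite coefXD1n.
Qed.

Lemma exprD1_pchar (R : nzRingType) p (x : R) : p \in [pchar R] ->
  (x + 1) ^+ p = x ^+ p + 1.
Proof.
move=> pcharRp; have := pFrobenius_autD_comm pcharRp (commr1 x).
by rewrite !pFrobenius_autE expr1n.
Qed.

Section ExponentialSequences.
Variables (k : fieldType) (R : algType k).

Definition exp_seq (a : nat -> R) : Prop :=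
  a 0%N = 1 /\ forall i j, a i * a j = 'C(i + j, i)%:R *: a (i + j)%N.

Lemma eq_exp_seq a b : a =1 b -> exp_seq a -> exp_seq b.
Proof. by move=> eq_ab [a0 aM]; split=> [|i j]; rewrite -!eq_ab. Qed.

Lemma exp_seq_comm a : exp_seq a -> forall i j, GRing.comm (a i) (a j).
Proof. by case=> _ aM i j; rewrite /GRing.comm !aM addnC bin_symD. Qed.

Variable p : nat.
Hypothesis pcharkp : p \in [pchar k].
Let p_prime : prime p := pcharf_prime pcharkp.

Lemma fact_pchar_neq0 d : (d < p)%N -> (d`!%:R : k) != 0.
Proof.
rewrite -(dvdn_pcharf pcharkp); elim: d => [|d IHd] lt_dp.
  by rewrite fact0 dvdn1 gtn_eqF ?prime_gt1.
by rewrite factS Euclid_dvdM // negb_or IHd 1?ltnW // gtnNdvd.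
Qed.

Lemma exp_seq_pexpX a e d : exp_seq a ->
  a (p ^ e)%N ^+ d = d`!%:R *: a (d * p ^ e)%N.
Proof.
case=> a0 aM; elim: d => [|d IHd]; first by rewrite expr0 mul0n a0 scale1r.
have pe_gt0 : (0 < p ^ e)%N by rewrite expn_gt0 prime_gt0.
rewrite exprSr IHd -scalerAl aM scalerA -mulSnr [X in 'C(X, _)]mulnC.
by rewrite bin_pchar_pexpM // dvdn_mull // mulnK // binSn factS natrM mulrC.
Qed.

Lemma exp_seq_pexp_nilpotent a e : exp_seq a -> a (p ^ e)%N ^+ p = 0.
Proof.
move=> expa; rewrite exp_seq_pexpX // (eqP (_ : p`!%:R == 0 :> k)) ?scale0r //.
by rewrite -(dvdn_pcharf pcharkp) dvdn_fact // leqnn andbT prime_gt0.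
Qed.

Lemma exp_seq_eq a b : exp_seq a -> exp_seq b ->
  (forall e, a (p ^ e)%N = b (p ^ e)%N) -> a =1 b.
Proof.
move=> expa expb eq_pexp; elim/ltn_ind => i IHi.
have [->|i_gt0] := posnP i; first by rewrite expa.1 expb.1.
have [m p'm] := pfactor_coprime p_prime i_gt0; move: (logn p i) => e def_i.
have pe_gt0 : (0 < p ^ e)%N by rewrite expn_gt0 prime_gt0.
have m_gt0 : (0 < m)%N by move: i_gt0; rewrite def_i muln_gt0 => /andP[].
have [m_gt1|] := ltnP 1 m; last first.
  by rewrite leq_eqVlt ltnS leqNgt m_gt0 orbF def_i => /eqP->; rewrite mul1n.
have split_i : i = (p ^ e + m.-1 * p ^ e)%N by rewrite def_i -mulSn prednK.
have bin_i : 'C(i, p ^ e)%:R = m%:R :> k.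
  by rewrite def_i mulnC bin_pchar_pexpM // dvdnn divnn pe_gt0 bin1.
have m_neq0 : m%:R != 0 :> k by rewrite -(dvdn_pcharf pcharkp) -prime_coprime.
have recur c : exp_seq c -> c i = m%:R^-1 *: (c (p ^ e)%N * c (m.-1 * p ^ e)%N).
  by case=> _ cM; rewrite cM -split_i bin_i scalerA mulVf // scale1r.
rewrite (recur a) // (recur b) // eq_pexp IHi //.
by rewrite [X in (_ < X)%N]split_i -[X in (X < _)%N]add0n ltn_add2r.
Qed.

Definition texp_seq (N : R) (i : nat) : R :=
  if (i < p)%N then i`!%:R^-1 *: N ^+ i else 0.

Lemma texp_seq0 N : texp_seq N 0 = 1.
Proof. by rewrite /texp_seq prime_gt0 // invr1 scale1r. Qed.

Lemma commr_texp_seq N Z i : GRing.comm N Z -> GRing.comm (texp_seq N i) Z.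
Proof.
move=> cNZ; rewrite /texp_seq; case: ifP => _; last exact/commr_sym/commr0.
rewrite /GRing.comm -scalerAl -scalerAr; congr (_ *: _).
exact/commr_sym/commrX/commr_sym.
Qed.

Lemma exp_seq_texp N : N ^+ p = 0 -> exp_seq (texp_seq N).
Proof.
move=> Np0; split=> [|i j]; first exact: texp_seq0.
rewrite /texp_seq; have [lt_ijp | le_pij] := ltnP (i + j) p; last first.
  rewrite scaler0; case: ifP => _; case: ifP => _; rewrite ?mulr0 ?mul0r //.
  by rewrite -scalerAl -scalerAr -exprD -(subnKC le_pij) exprD Np0 mul0r !scaler0.
rewrite (leq_ltn_trans (leq_addr j i)) // (leq_ltn_trans (leq_addl i j)) //.
rewrite -scalerAl -scalerAr !scalerA -exprD; congr (_ *: _).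
have := bin_fact (leq_addr j i); rewrite addKn => /(congr1 (GRing.natmul (1 : k))).
rewrite !natrM => fact_ij; have := fact_pchar_neq0 lt_ijp.
rewrite -fact_ij mulf_eq0 negb_or => /andP[bin_neq0 _].
by rewrite invfM mulrA mulfV // mul1r invfM.
Qed.

Lemma exp_seq_comp_pexp a e : exp_seq a ->
  exp_seq (fun i => if (p ^ e %| i)%N then a (i %/ p ^ e)%N else 0).
Proof.
case=> a0 aM; have pe_gt0 : (0 < p ^ e)%N by rewrite expn_gt0 prime_gt0.
split=> [|i j /=]; first by rewrite dvdn0 div0n a0.
have bin_ndvd l m : ~~ (p ^ e %| l)%N -> (p ^ e %| l + m)%N -> 'C(l + m, l)%:R = 0 :> k.
  by move=> p'l /dvdnP[u ->]; rewrite mulnC bin_pchar_pexpM // (negPf p'l).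
have [/dvdnP[u ->]|p'i] := boolP (p ^ e %| i)%N; last first.
  rewrite mul0r; case: ifP => [/(bin_ndvd _ _ p'i)->|_]; by rewrite ?scale0r ?scaler0.
have [/dvdnP[v ->]|p'j] := boolP (p ^ e %| j)%N; last first.
  rewrite mulr0 bin_symD addnC.
  case: ifP => [/(bin_ndvd _ _ p'j)->|_]; by rewrite ?scale0r ?scaler0.
rewrite -mulnDl !dvdn_mull // !mulnK // aM [((u + v) * _)%N]mulnC.
by rewrite bin_pchar_pexpM // dvdn_mull // mulnK.
Qed.

End ExponentialSequences.

Section CoefficientMatrices.
Variables (k : fieldType) (n : nat).
Local Notation M := 'M[k]_n.+1.
Local Notation PM := 'M[{poly k}]_n.+1.

Definition coefmx (A : PM) (i : nat) : M := map_mx (fun q : {poly k} => q`_i) A.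

Lemma coefmx_inj (A B : PM) : coefmx A =1 coefmx B -> A = B.
Proof.
move=> eqAB; apply/matrixP => a b; apply/polyP => i.
by have /matrixP/(_ a b) := eqAB i; rewrite !mxE.
Qed.

Lemma coefmxM (A B : PM) i :
  coefmx (A * B) i = \sum_(u < i.+1) coefmx A u * coefmx B (i - u).
Proof.
apply/matrixP => a b; rewrite summxE !mxE coef_sum.
under eq_bigr do rewrite coefM.
rewrite exchange_big /=; apply: eq_bigr => u _.
by rewrite !mxE; apply: eq_bigr => c _; rewrite !mxE.
Qed.

Lemma coefmx1 i : coefmx 1 i = if i == 0%N then 1 else 0.
Proof.
case: eqP => [->|/eqP ne_i0]; apply/matrixP => a b; rewrite !mxE;
  by case: (a == b); rewrite ?coef1 ?coef0 ?(negPf ne_i0).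
Qed.

Lemma coefmx0 (A : PM) : coefmx A 0 = map_mx (fun q : {poly k} => q.[0]) A.
Proof. by apply/matrixP => a b; rewrite !mxE horner_coef0. Qed.

Lemma coef_polyTM_polyT' (A B : PM) a b i j :
  ((map_mx (@polyT k) A *m map_mx (@polyT' k) B) a b)`_j`_i =
  (coefmx A i *m coefmx B j) a b.
Proof.
rewrite !mxE coef_sum coef_sum; apply: eq_bigr => c _.
by rewrite !mxE /polyT /polyT' coefCM coef_map /= coefMC.
Qed.

Lemma coef_polyT'M_polyT (A B : PM) a b i j :
  ((map_mx (@polyT' k) B *m map_mx (@polyT k) A) a b)`_j`_i =
  (coefmx B j *m coefmx A i) a b.
Proof.
rewrite !mxE coef_sum coef_sum; apply: eq_bigr => c _.
by rewrite !mxE /polyT /polyT' coefMC coef_map /= coefCM.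
Qed.

Lemma coef_polyTT' (q : {poly k}) i j :
  (polyTT' q)`_j`_i = q`_(i + j) *+ 'C(i + j, i).
Proof.
have taylor : polyTT' q = \poly_(j < size q) q^`N(j).
  rewrite /polyTT' /comp_poly addrC nderiv_taylor; last exact: mulrC.
  rewrite poly_def !size_map_polyC; apply: eq_bigr => l _.
  by rewrite !nderivn_map horner_map -[_.['X]]/(_ \Po 'X) comp_polyXr mul_polyC.
rewrite taylor coef_poly; case: ltnP => [_ | le_qj].
  by rewrite coef_nderivn addnC bin_symD.
by rewrite coef0 nth_default ?mul0rn // (leq_trans le_qj) ?leq_addl.
Qed.

Lemma is_exponentialE (A : PM) : is_exponential A <-> exp_seq (coefmx A).
Proof.
rewrite /is_exponential /exp_seq -coefmx0; split=> [[expA ->] | [-> expA]].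
  split=> // i j; apply/matrixP => a b.
  move/matrixP/(_ a b)/(congr1 (fun q : {poly {poly k}} => q`_j`_i)): expA.
  by rewrite coef_polyTM_polyT' mulmxE => ->; rewrite !mxE coef_polyTT' mulr_natl.
split=> //; apply/matrixP => a b; apply/polyP => j; apply/polyP => i.
by rewrite coef_polyTM_polyT' mulmxE expA !mxE coef_polyTT' mulr_natl.
Qed.

Lemma map_mx_polyTT' (A : PM) : map_mx (@polyTT' k) A =
  map_mx (comp_poly ('X + ('X : {poly k})%:P)) (map_mx (map_poly (@polyC k)) A).
Proof. by rewrite -map_mx_comp. Qed.

Lemma is_exponential1 : is_exponential (1 : PM).
Proof.
split; last by rewrite -coefmx0 coefmx1.
rewrite map_mx_polyTT' (map_mx1 (@polyC {poly k})) (map_mx1 (map_poly (@polyC k))).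
by rewrite map_mx1 mulmx1.
Qed.

Lemma is_exponentialM (A B : PM) : is_exponential A -> is_exponential B ->
  (forall i j, GRing.comm (coefmx A i) (coefmx B j)) -> is_exponential (A * B).
Proof.
move=> [expA A0] [expB B0] cAB; split; last first.
  by rewrite -coefmx0 coefmxM big_ord1 !coefmx0 A0 B0 mul1r.
have commBA : map_mx (@polyT k) B *m map_mx (@polyT' k) A =
              map_mx (@polyT' k) A *m map_mx (@polyT k) B.
  apply/matrixP => a b; apply/polyP => j; apply/polyP => i.
  by rewrite coef_polyTM_polyT' coef_polyT'M_polyT !mulmxE cAB.
rewrite !map_mx_polyTT' -!mulmxE (map_mxM (@polyC {poly k})) !map_mxM -!map_mx_polyTT'.
rewrite -expA -expB -!mulmxA; congr (_ *m _); rewrite !mulmxA; congr (_ *m _).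
exact: commBA.
Qed.

End CoefficientMatrices.

Section Construction.
Variables (k : fieldType) (n p : nat).
Hypothesis pcharkp : p \in [pchar k].
Let p_gt0 : (0 < p)%N := prime_gt0 (pcharf_prime pcharkp).
Local Notation M := 'M[k]_n.+1.
Local Notation PM := 'M[{poly k}]_n.+1.

Definition texp (N : M) : PM := \matrix_(a, b) \poly_(i < p) texp_seq p N i a b.

Lemma coefmx_texp N : coefmx (texp N) =1 texp_seq p N.
Proof.
move=> i; apply/matrixP => a b; rewrite !mxE coef_poly /texp_seq.
by case: (i < p)%N; rewrite ?mxE.
Qed.

Lemma coefmx_comp_Xn (A : PM) q i : (0 < q)%N ->
  coefmx (map_mx (comp_poly 'X^q) A) i = if (q %| i)%N then coefmx A (i %/ q) else 0.
Proof.
move=> q_gt0; apply/matrixP => a b; rewrite !mxE coef_comp_poly_Xn //.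
by case: ifP => _; rewrite !mxE.
Qed.

(* [expprod N r] is the product over [e < r] of [texp (N e)] evaluated at
   [T ^ p ^ e]. *)
Fixpoint expprod (N : nat -> M) (r : nat) : PM :=
  if r is r.+1 then texp (N 0%N) * map_mx (comp_poly 'X^p) (expprod (N \o succn) r)
  else 1.

Lemma commr_coefmx_expprod N r Z : (forall e, GRing.comm (N e) Z) ->
  forall i, GRing.comm (coefmx (expprod N r) i) Z.
Proof.
elim: r N => [|r IHr] N cNZ i /=.
  by rewrite coefmx1; case: ifP => _; [exact/commr_sym/commr1 | exact/commr_sym/commr0].
rewrite coefmxM; apply/commr_sym/commr_sum => u _; apply: commrM; apply/commr_sym.
  by rewrite coefmx_texp; apply: commr_texp_seq.
rewrite coefmx_comp_Xn //; case: ifP => _; last exact/commr_sym/commr0.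
by apply: IHr => e; apply: cNZ.
Qed.

Lemma is_exponential_expprod N r : (forall a b, GRing.comm (N a) (N b)) ->
  (forall a, N a ^+ p = 0) -> is_exponential (expprod N r).
Proof.
elim: r N => [|r IHr] N cN nilN /=; first exact: is_exponential1.
have expB := IHr (N \o succn) (fun a b => cN _ _) (fun a => nilN _).
apply: is_exponentialM.
- apply/is_exponentialE/(eq_exp_seq (fsym (coefmx_texp _))).
  exact: exp_seq_texp.
- apply/is_exponentialE/(eq_exp_seq (fun i => esym (coefmx_comp_Xn _ i p_gt0))).
  by have := exp_seq_comp_pexp pcharkp 1 (iffLR (is_exponentialE _) expB); rewrite expn1.
move=> i j; rewrite coefmx_texp; apply: commr_texp_seq; apply: commr_sym.
rewrite coefmx_comp_Xn //; case: ifP => _; last exact/commr_sym/commr0.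
by apply: commr_coefmx_expprod => e; apply: cN.
Qed.

Lemma coefmx_expprod0 N r : coefmx (expprod N r) 0 = 1.
Proof.
elim: r N => [|r IHr] N /=; first by rewrite coefmx1.
rewrite coefmxM big_ord1 coefmx_texp coefmx_comp_Xn // dvdn0 div0n IHr.
by rewrite texp_seq0 // mulr1.
Qed.

Lemma coefmx_mul_comp_Xp (A B : PM) m d : (d < p)%N ->
  (forall i, (p <= i)%N -> coefmx A i = 0) ->
  coefmx (A * map_mx (comp_poly 'X^p) B) (m * p + d) = coefmx A d * coefmx B m.
Proof.
move=> lt_dp Ap; have lt_d : (d < (m * p + d).+1)%N by rewrite ltnS leq_addl.
rewrite coefmxM (bigD1 (Ordinal lt_d)) //= addnK coefmx_comp_Xn // dvdn_mull //.
rewrite mulnK // big1 ?addr0 // => u ne_ud.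
have [/Ap->|lt_up] := leqP p u; first by rewrite mul0r.
rewrite coefmx_comp_Xn //; case: ifP => [/eqP dvd_p|_]; last by rewrite mulr0.
have /eqP := modnDml (m * p + d - u) u p.
rewrite dvd_p add0n subnK -1?ltnS // modnMDl !modn_small // => eq_ud.
by move: ne_ud; rewrite -(inj_eq val_inj) /= (eqP eq_ud) eqxx.
Qed.

Lemma coefmx_expprod_pexp N r e :
  coefmx (expprod N r) (p ^ e) = if (e < r)%N then N e else 0.
Proof.
elim: r N e => [|r IHr] N e /=.
  by rewrite coefmx1 expn_eq0 (gtn_eqF p_gt0).
have coef_texp_ge_p i : (p <= i)%N -> coefmx (texp (N 0%N)) i = 0.
  by move=> le_pi; rewrite coefmx_texp /texp_seq ltnNge le_pi.
have p_gt1 := prime_gt1 (pcharf_prime pcharkp).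
case: e => [|e].
  rewrite -[(p ^ 0)%N]/((0 * p + 1)%N) coefmx_mul_comp_Xp // coefmx_expprod0 mulr1.
  by rewrite coefmx_texp /texp_seq p_gt1 invr1 scale1r expr1.
rewrite expnSr -[(p ^ e * p)%N]addn0 coefmx_mul_comp_Xp // IHr coefmx_texp.
by rewrite texp_seq0 // mul1r.
Qed.

End Construction.

Section PexpBound.
Variables (k : fieldType) (n p : nat).
Hypothesis p_gt1 : (1 < p)%N.
Local Notation PM := 'M[{poly k}]_n.+1.

Definition mxpoly_size (A : PM) : nat :=
  \max_(ab : 'I_n.+1 * 'I_n.+1) size (A ab.1 ab.2).

Lemma coefmx_size (A : PM) i : (mxpoly_size A <= i)%N -> coefmx A i = 0.
Proof.
move=> le_Ai; apply/matrixP => a b; rewrite !mxE nth_default //.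
exact: leq_trans (leq_bigmax (a, b)) le_Ai.
Qed.

Definition pexp_bound (A : PM) : nat :=
  \max_(e < mxpoly_size A | coefmx A (p ^ e) != 0) e.+1.

Lemma coefmx_pexp_bound (A : PM) e : (pexp_bound A <= e)%N -> coefmx A (p ^ e) = 0.
Proof.
move=> le_Ae; have [lt_e | le_e] := ltnP e (mxpoly_size A); last first.
  by apply: coefmx_size; rewrite (leq_trans le_e) // ltnW // ltn_expl.
apply/eqP; apply: contraTT le_Ae => nz_e; rewrite -ltnNge.
exact: (leq_bigmax_cond (Ordinal lt_e) nz_e).
Qed.

Lemma pexp_bound_min (A : PM) r :
  (forall e, (r <= e)%N -> coefmx A (p ^ e) = 0) -> (pexp_bound A <= r)%N.
Proof.
move=> Ar; apply/bigmax_leqP => e; rewrite ltnNge; apply: contra => le_re.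
by rewrite Ar ?eqxx.
Qed.

End PexpBound.

Section Homomorphisms.
Variables (k : fieldType) (n p r : nat).
Hypothesis pcharkp : p \in [pchar k].
Let p_gt1 : (1 < p)%N := prime_gt1 (pcharf_prime pcharkp).
Local Notation M := 'M[k]_n.+1.
Local Notation G := (Zp_pow p r).

Let pcharM : p \in [pchar M] := rmorph_pchar (@scalar_mx k n.+1) pcharkp.

Definition basis_vec (i : 'I_r) : G := [ffun j => (j == i)%:R].

Lemma basis_vec_decomp (x : G) : x = \sum_(i < r) basis_vec i *+ x i.
Proof.
apply/ffunP => j; rewrite sum_ffunE (bigD1 j) //= big1 ?addr0.
  by rewrite ffunMnE ffunE eqxx natr_Zp.
by move=> i ne_ij; rewrite ffunMnE ffunE eq_sym (negPf ne_ij) mul0rn.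
Qed.

Section FromHom.
Variable f : {ffun G -> M}.
Hypothesis homf : is_hom_GL f.

Lemma homD x y : f (x + y) = f x * f y.
Proof. by rewrite homf.2 mulmxE. Qed.

Lemma hom0 : f 0 = 1.
Proof. by apply: (mulrI (homf.1 0)); rewrite -homD addr0 mulr1. Qed.

Lemma homMn x m : f (x *+ m) = f x ^+ m.
Proof. by elim: m => [|m IHm]; rewrite ?hom0 // mulrS homD IHm exprS. Qed.

Lemma hom_decomp x : f x = \prod_(i < r) f (basis_vec i) ^+ x i.
Proof.
rewrite {1}(basis_vec_decomp x) (big_morph f homD hom0).
by apply: eq_bigr => i _; rewrite homMn.
Qed.

Definition hom_nilseq (e : nat) : M :=
  if insub e is Some i then f (basis_vec i) - 1 else 0.

Lemma hom_nilseq_ord (i : 'I_r) : hom_nilseq i = f (basis_vec i) - 1.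
Proof. by rewrite /hom_nilseq valK. Qed.

Lemma hom_nilseq_comm a b : GRing.comm (hom_nilseq a) (hom_nilseq b).
Proof.
rewrite /hom_nilseq; case: insub => [i|]; case: insub => [j|];
  rewrite /GRing.comm ?mulr0 ?mul0r //.
have fji : GRing.comm (f (basis_vec j)) (f (basis_vec i)).
  by rewrite /GRing.comm -!homD addrC.
apply: commrB; last exact: commr1.
by apply: commr_sym; apply: commrB; [exact: fji | exact: commr1].
Qed.

Lemma hom_nilseq_nilpotent a : hom_nilseq a ^+ p = 0.
Proof.
rewrite /hom_nilseq; case: insub => [i|]; last by rewrite expr0n gtn_eqF // ltnW.
have fi_p : f (basis_vec i) ^+ p = 1.
  rewrite -homMn -hom0; congr (f _); apply/ffunP => j.
  by rewrite ffunMnE !ffunE -mulrnA natrM pchar_Zp // mulr0.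
have := exprD1_pchar (f (basis_vec i) - 1) pcharM.
by rewrite subrK fi_p -[X in X = _]add0r => /addIr/esym.
Qed.

End FromHom.

Definition hom_of_nilseq (N : nat -> M) : {ffun G -> M} :=
  [ffun x : G => \prod_(i < r) (1 + N i) ^+ x i].

Lemma hom_of_nilseq_basis N i : hom_of_nilseq N (basis_vec i) = 1 + N i.
Proof.
rewrite ffunE (eq_bigr (fun j => if j == i then 1 + N i else 1)).
  by rewrite -big_mkcond big_pred1_eq.
by move=> j _; rewrite ffunE; case: eqP => [->|_]; rewrite ?modn_small.
Qed.

Lemma hom_of_nilseqK f : is_hom_GL f -> hom_of_nilseq (hom_nilseq f) = f.
Proof.
move=> homf; apply/ffunP => x; rewrite ffunE (hom_decomp homf).
by apply: eq_bigr => i _; rewrite hom_nilseq_ord addrC subrK.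
Qed.

Section ToHom.
Variable N : nat -> M.
Hypotheses (commN : forall a b, GRing.comm (N a) (N b)) (nilN : forall a, N a ^+ p = 0).

Lemma unipotent_comm a b : GRing.comm (1 + N a) (1 + N b).
Proof.
apply: commrD; first exact: commr1.
by apply: commr_sym; apply: commrD; [exact: commr1 | exact: commN].
Qed.

Lemma unipotent_expp a : (1 + N a) ^+ p = 1.
Proof. by rewrite addrC exprD1_pchar // nilN add0r. Qed.

Lemma is_hom_GL_hom_of_nilseq : is_hom_GL (hom_of_nilseq N).
Proof.
split=> [x | x y]; rewrite !ffunE.
  apply: (big_ind (fun A : M => A \in unitmx)) => [|A B uA uB|i _]; rewrite ?unitmx1 //.
    by rewrite -mulmxE unitmx_mul uA.
  apply: unitrX; have := unitr1 M.
  rewrite -{1}(unipotent_expp i) -(prednK (ltnW p_gt1)) exprS.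
  by rewrite unitrM_comm => [/andP[] //|]; apply/commrX/commr_refl.
rewrite -[_ *m _]/(_ * _) -prodrM_comm => [|i j _ _]; last first.
  exact/commrX/commr_sym/commrX/unipotent_comm.
apply: eq_bigr => i _; rewrite ffunE -exprD -[in RHS](expr_mod _ (unipotent_expp i)).
by congr (_ ^+ _); rewrite -[X in (_ %% X)%N](Zp_cast p_gt1).
Qed.

End ToHom.

End Homomorphisms.

Section Correspondence.
Variables (k : fieldType) (n p : nat).
Hypothesis pcharkp : p \in [pchar k].
Let p_gt1 : (1 < p)%N := prime_gt1 (pcharf_prime pcharkp).
Local Notation M := 'M[k]_n.+1.
Local Notation PM := 'M[{poly k}]_n.+1.

Definition hom_GL_Zp_pow := {r : nat & {f : {ffun Zp_pow p r -> M} | is_hom_GL f}}.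
Definition exp_mx_nat := ({A : PM | is_exponential A} * nat)%type.

Definition exp_of_hom (h : hom_GL_Zp_pow) : exp_mx_nat :=
  let: existT r (exist f homf) := h in
  (exist _ (expprod p (hom_nilseq f) r) (is_exponential_expprod pcharkp r
     (hom_nilseq_comm homf) (hom_nilseq_nilpotent pcharkp homf)),
   r - pexp_bound p (expprod p (hom_nilseq f) r))%N.

Definition pexp_coefs (A : PM) (e : nat) : M := coefmx A (p ^ e).

Lemma pexp_coefs_comm A : is_exponential A ->
  forall a b, GRing.comm (pexp_coefs A a) (pexp_coefs A b).
Proof. by move/is_exponentialE/exp_seq_comm => cA a b; apply: cA. Qed.

Lemma pexp_coefs_nilpotent A : is_exponential A -> forall a, pexp_coefs A a ^+ p = 0.
Proof. by move/is_exponentialE/(exp_seq_pexp_nilpotent pcharkp). Qed.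

Definition hom_of_pexp_coefs r A (expA : is_exponential A) : hom_GL_Zp_pow :=
  existT _ r (exist _ (hom_of_nilseq p r (pexp_coefs A)) (is_hom_GL_hom_of_nilseq
    r pcharkp (pexp_coefs_comm expA) (pexp_coefs_nilpotent expA))).

Definition hom_of_exp (x : exp_mx_nat) : hom_GL_Zp_pow :=
  hom_of_pexp_coefs (pexp_bound p (sval x.1) + x.2) (svalP x.1).

Lemma exp_of_homK : cancel exp_of_hom hom_of_exp.
Proof.
case=> r [f homf]; rewrite /hom_of_exp /=.
set A := expprod p (hom_nilseq f) r.
have le_Ar : (pexp_bound p A <= r)%N.
  apply: pexp_bound_min => e le_re.
  by rewrite coefmx_expprod_pexp // ltnNge le_re.
rewrite subnKC //; congr (existT _ _ _); apply: subset_eq_compat.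
rewrite -[RHS](hom_of_nilseqK homf); apply/ffunP => x; rewrite !ffunE.
by apply: eq_bigr => i _; rewrite /pexp_coefs coefmx_expprod_pexp // ltn_ord.
Qed.

Lemma hom_of_expK : cancel hom_of_exp exp_of_hom.
Proof.
case=> [[A expA] m]; rewrite /hom_of_exp /hom_of_pexp_coefs /=.
set r := (pexp_bound p A + m)%N; set g := hom_of_nilseq p r (pexp_coefs A).
have homg : is_hom_GL g.
  exact: is_hom_GL_hom_of_nilseq (pexp_coefs_comm expA) (pexp_coefs_nilpotent expA).
have expprodA : expprod p (hom_nilseq g) r = A.
  apply: coefmx_inj; apply: (exp_seq_eq pcharkp).
  - apply/is_exponentialE/is_exponential_expprod => //.
    + exact: hom_nilseq_comm.
    + exact: hom_nilseq_nilpotent.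
  - exact/is_exponentialE.
  move=> e; rewrite coefmx_expprod_pexp //; have [lt_er | le_re] := ltnP e r.
    rewrite -[e]/(nat_of_ord (Ordinal lt_er)) hom_nilseq_ord hom_of_nilseq_basis.
    by rewrite addrC addKr.
  by rewrite coefmx_pexp_bound // (leq_trans _ le_re) ?leq_addr.
congr (_, _); first exact: subset_eq_compat.
by rewrite expprodA addKn.
Qed.

End Correspondence.

Theorem theorem0p2 (k : closedFieldType) (p n : nat) (hp : prime p)
  (hchar : p \in [pchar k]) (hn : (1 <= n)%N) :
  exists F : {r : nat & {f : {ffun Zp_pow p r -> 'M[k]_n} | is_hom_GL f}} ->
             ({A : 'M[{poly k}]_n | is_exponential A} * nat)%type,
    bijective F.
Proof.
case: n hn => [//|n] _.
exists (exp_of_hom hchar); exists (hom_of_exp hchar).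
- exact: exp_of_homK.
- exact: hom_of_expK.
Qed.
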